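(* Define, for integers $n\ge 1$ and $0\le d\le n$, a set $\mathcal{M}(n,d)$ of subsets of $\{0,1\}^n$ recursively as follows. $\mathcal{M}(n,0)=\{\{v\}: v\in\{0,1\}^n\}$ and $\mathcal{M}(n,n)=\{\{0,1\}^n\}$. For $1\le d\le n-1$, $\mathcal{M}(n,d)$ consists of all classes obtained in the following way: choose $C\in\mathcal{M}(n-1,d)$ and $C'\in\mathcal{M}(n-1,d-1)$ with $C'\subset C$; let $C_1,\dots,C_k$ be the $C'$-connected components of $C$; choose $p=(p_1,\dots,p_k)\in\{0,1\}^k$; and form $$\big(C'\times\{0,1\}\big)\ \cup\ \bigcup_{q=1}^k C_q\times\{p_q\}\ \subseteq\{0,1\}^n.$$ Then for all $n\in\mathbb{N}$ and $d\in\{1,\dots,n\}$, $\mathcal{M}(n,d)$ is exactly the set of all maximum classes of VC-dimension $d$ in $\{0,1\}^n$.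
   Context: A concept class is a subset $C\subseteq\{0,1\}^n$. Its VC-dimension is the largest $m$ such that for some set $Y$ of $m$ coordinates the projection of $C$ onto $Y$ is all of $\{0,1\}^Y$. $C$ is called $d$-maximum (maximum of VC-dimension $d$) if $\mathrm{VC}(C)=d$ and $|C|=\sum_{i=0}^{d}\binom{n}{i}$. The one-inclusion graph $\Gamma(C)$ has vertex set $C$ and an edge between $u,v$ iff they differ in exactly one coordinate. A $d$-cube of $C$ is a set of $2^d$ points of $C$ that agree outside some set of $d$ coordinates and take all $2^d$ values on those coordinates (a $d$-dimensional face of $\{0,1\}^n$ contained in $C$). For $C'\subset C$, two $d$-cubes $Q_1,Q_2$ of $C$ are $C'$-connected if there is a path in $\Gamma(C)$ with one endpoint in $Q_1$ and the other in $Q_2$ that does not intersect $C'$; the $C'$-connected components of $C$ are the equivalence classes of $d$-cubes of $C$ under this relation, each regarded as the set of vertices of its cubes. $C\times\{b\}$ denotes $\{(c,b):c\in C\}\subseteq\{0,1\}^n$ for $C\subseteq\{0,1\}^{n-1}$. *)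

From mathcomp Require Import all_boot.
Set Implicit Arguments. Unset Strict Implicit. Unset Printing Implicit Defensive.

Definition cube (n : nat) := {ffun 'I_n -> bool}.

Definition adj n (u v : cube n) : bool := #|[set i | u i != v i]| == 1.

(* there is a path in the one-inclusion graph whose vertices all lie in D
   (used with D = C :\: C', i.e. a path in Gamma(C) avoiding C') *)
Definition pathin n (D : {set cube n}) (u v : cube n) : bool :=
  (u \in D) && connect (fun x y => [&& x \in D, y \in D & adj x y]) u v.

Definition is_dcube n (d : nat) (Q : {set cube n}) : bool :=
  [exists Y : {set 'I_n}, (#|Y| == d) &&
     [exists x : cube n, Q == [set y : cube n | [forall i in ~: Y, y i == x i]]]].

Definition dcube_of n (d : nat) (C : {set cube n}) (Q : {set cube n}) : bool :=
  is_dcube d Q && (Q \subset C).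

Definition cconn n d (C C' : {set cube n}) (Q1 Q2 : {set cube n}) : bool :=
  [&& dcube_of d C Q1, dcube_of d C Q2 &
    [exists u in Q1, exists v in Q2, pathin (C :\: C') u v]].

Definition same_comp n d (C C' : {set cube n}) (Q1 Q2 : {set cube n}) : bool :=
  connect (cconn d C C') Q1 Q2.

(* (c, b) : append a last coordinate *)
Definition ext n (c : cube n) (b : bool) : cube n.+1 :=
  [ffun i : 'I_n.+1 => if unlift ord_max i is Some j then c j else b].

Definition times n (C : {set cube n}) (b : bool) : {set cube n.+1} :=
  [set ext c b | c in C].

(* The choice p in {0,1}^k of a bit per
   C'-connected component is encoded as a function on d-cubes that is
   constant on components; the union over components C_q x {p_q} is then the
   union over d-cubes Q of C of Q x {p Q}. *)
Inductive isM : forall n : nat, nat -> {set cube n} -> Prop :=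
| M_zero n (v : cube n) : 1 <= n -> isM 0 [set v]
| M_full n : 1 <= n -> isM n [set: cube n]
| M_step m d (C C' : {set cube m}) (p : {set cube m} -> bool) :
    1 <= d -> d <= m ->
    isM d C -> isM d.-1 C' -> C' \subset C ->
    (forall Q1 Q2, dcube_of d C Q1 -> same_comp d C C' Q1 Q2 -> p Q1 = p Q2) ->
    isM d
      (times C' false :|: times C' true :|:
       \bigcup_(Q | dcube_of d C Q) times Q (p Q)).

Definition shatters n (C : {set cube n}) (Y : {set 'I_n}) : bool :=
  [forall f : cube n, [exists c in C, [forall i in Y, c i == f i]]].

Definition VCdim_eq n (C : {set cube n}) (d : nat) : Prop :=
  (exists Y : {set 'I_n}, shatters C Y /\ #|Y| = d) /\
  (forall Y : {set 'I_n}, shatters C Y -> #|Y| <= d).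

Definition maximum n (d : nat) (C : {set cube n}) : Prop :=
  VCdim_eq C d /\ #|C| = \sum_(i < d.+1) 'C(n, i).

From mathcomp Require Import all_boot zify.
Set Implicit Arguments. Unset Strict Implicit. Unset Printing Implicit Defensive.

(* A class D is ample when it shatters exactly #|D| sets (Pajor: it always
   shatters at least #|D|). A class of VC-dimension at most d meeting the
   Sauer-Shelah bound shatters every set of size at most d, hence is ample;
   ample classes have ample slices and fibers and are connected in the
   one-inclusion graph. For such a class C of dimension d+1 in {0,1}^(m+1), the
   projection P and the reduct R (points extending both ways) meet the bound
   in dimensions d+1 and d. Every point of P lies in a (d+1)-cube of P, and by
   ampleness each such cube lifts entirely into one level of C, which gives its
   bit; points of P \ R joined by an edge get the same bit, so the bits are
   constant on R-connected components and C is built from (P, R, bits).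
   Conversely a built class projects to C and reduces to C', so it has the
   right size, and a shattered set of size d+2 would yield a path avoiding C'
   between cubes carrying different bits. *)

Section Shattering.
Variable n : nat.
Implicit Types (D E : {set cube n}) (Y Z : {set 'I_n}) (x y f : cube n).

Definition shattered D := [set Y | shatters D Y].
Definition slice D i b := [set x in D | x i == b].
Definition ample D := #|shattered D| = #|D|.

Lemma shattersP D Y :
  reflect (forall f, exists2 c, c \in D & forall i, i \in Y -> c i = f i) (shatters D Y).
Proof.
apply: (iffP forallP) => H f.
  have /existsP[c /andP[cD /forallP cf]] := H f.
  by exists c => // i iY; apply/eqP; have := cf i; rewrite iY.
have [c cD cf] := H f; apply/existsP; exists c; rewrite cD /=.
by apply/forallP => i; apply/implyP => iY; rewrite cf.
Qed.

Lemma shattersS D E Y : D \subset E -> shatters D Y -> shatters E Y.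
Proof.
move=> DE /shattersP H; apply/shattersP => f; have [c cD cf] := H f.
by exists c => //; apply: (subsetP DE).
Qed.

Lemma shatters0 D : shatters D set0 = (D != set0).
Proof.
apply/shattersP/set0Pn => [H|[x xD] f]; first by have [c cD _] := H [ffun=> true]; exists c.
by exists x => // i; rewrite inE.
Qed.

Lemma slice_sub D i b : slice D i b \subset D.
Proof. by apply/subsetP => x; rewrite inE => /andP[]. Qed.

Lemma shatters_slice D i b Y : shatters (slice D i b) Y -> i \notin Y.
Proof.
move/shattersP => H; apply/negP => iY.
have [c] := H [ffun _ => ~~ b]; rewrite inE => /andP[_ /eqP cb] /(_ i iY).
by rewrite ffunE cb; case: (b).
Qed.

Lemma card_slices D i : #|D| = #|slice D i false| + #|slice D i true|.
Proof.
rewrite -(cardsID [set x : cube n | x i == false] D); congr (_ + _); apply: eq_card => x;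
by rewrite !inE; case: (x i); rewrite ?andbT ?andbF.
Qed.

Lemma exists_coord_neq x y : x != y -> exists i, x i != y i.
Proof.
move=> xy; apply/existsP; apply: contraR xy => /existsPn H.
by apply/eqP/ffunP => i; apply/eqP; have := H i; rewrite negbK.
Qed.

Lemma card_slice_lt D i b x y :
  x \in D -> y \in D -> x i != y i -> #|slice D i b| < #|D|.
Proof.
move=> xD yD xy; apply: proper_card; apply/properP; split; first exact: slice_sub.
have [xb|xb] := eqVneq (x i) b; last by exists x; rewrite // inE xD.
by exists y; rewrite // inE yD /= -xb eq_sym.
Qed.

Definition shattered_both D i :=
  setU [set i] @: (shattered (slice D i false) :&: shattered (slice D i true)).
Definition shattered_slices D i :=
  shattered (slice D i false) :|: shattered (slice D i true) :|: shattered_both D i.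

Lemma mem_shattered_both D i Y : Y \in shattered_both D i -> i \in Y.
Proof. by case/imsetP => Z _ ->; rewrite !inE eqxx. Qed.

Lemma card_shattered_both D i :
  #|shattered_both D i| = #|shattered (slice D i false) :&: shattered (slice D i true)|.
Proof.
apply: card_in_imset => Z1 Z2; rewrite !inE.
move=> /andP[/shatters_slice n1 _] /andP[/shatters_slice n2 _] EZ.
by rewrite -(setU1K n1) -(setU1K n2) EZ.
Qed.

Lemma shattered_slices_sub D i : shattered_slices D i \subset shattered D.
Proof.
apply/subsetP => Y; rewrite !inE -orbA => /or3P[H|H|].
- exact: shattersS (slice_sub D i false) H.
- exact: shattersS (slice_sub D i true) H.
case/imsetP => Z; rewrite !inE => /andP[/shattersP H0 /shattersP H1] ->.
apply/shattersP => f; case fi: (f i); [have [c] := H1 f | have [c] := H0 f];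
  rewrite inE => /andP[cD /eqP ci] cf; exists c => // j;
  by rewrite !inE => /orP[/eqP-> | /cf]; rewrite ?ci ?fi.
Qed.

Lemma card_shattered_slices D i :
  #|shattered_slices D i| = #|shattered (slice D i false)| + #|shattered (slice D i true)|.
Proof.
have disj : (shattered (slice D i false) :|: shattered (slice D i true))
             :&: shattered_both D i = set0.
  apply/setP => Y; rewrite !inE; apply/negP => /andP[H /mem_shattered_both iY].
  by case/orP: H => /shatters_slice; rewrite iY.
by rewrite cardsU disj cards0 subn0 card_shattered_both cardsUI.
Qed.

Lemma pajor D : #|D| <= #|shattered D|.
Proof.
elim: {D}#|D| {-2}D (leqnn #|D|) => [|k IH] D; first by rewrite leqn0 => /eqP->.
have [D1|] := leqP #|D| 1.
  have [->|nD] := eqVneq D set0; first by rewrite cards0.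
  move=> _; rewrite (leq_trans D1) // card_gt0; apply/set0Pn.
  by exists set0; rewrite inE shatters0.
case/card_gt1P => x [y [xD yD /exists_coord_neq[i xy]]] Dk.
have sliceIH b : #|slice D i b| <= #|shattered (slice D i b)|.
  by apply: IH; rewrite -ltnS (leq_trans (card_slice_lt b xD yD xy)).
apply: leq_trans (subset_leq_card (shattered_slices_sub D i)).
by rewrite card_shattered_slices (card_slices D i) leq_add.
Qed.

Lemma ample_slices D i : ample D ->
  [/\ ample (slice D i false), ample (slice D i true) & shattered_slices D i = shattered D].
Proof.
rewrite /ample => aD.
have s := subset_leq_card (shattered_slices_sub D i).
have p0 := pajor (slice D i false); have p1 := pajor (slice D i true).
have cs := card_slices D i; have ca := card_shattered_slices D i.
split; try lia.
by apply/eqP; rewrite eqEcard shattered_slices_sub; lia.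
Qed.

Lemma ample_shatters_slice D i Y : ample D -> i \notin Y -> shatters D Y ->
  shatters (slice D i false) Y \/ shatters (slice D i true) Y.
Proof.
move=> aD iY DY; have [_ _ E] := ample_slices i aD.
have : Y \in shattered_slices D i by rewrite E inE.
rewrite !inE -orbA => /or3P[->|->|/mem_shattered_both iY']; [by left|by right|].
by rewrite iY' in iY.
Qed.

End Shattering.

Section Connectivity.
Variable n : nat.
Implicit Types (D E : {set cube n}) (W : {set 'I_n}) (x y h : cube n).

Definition flip (i : 'I_n) x : cube n := [ffun j => if j == i then ~~ x j else x j].

Lemma flipK i : involutive (flip i).
Proof. by move=> x; apply/ffunP => j; rewrite !ffunE; case: eqP => // _; rewrite negbK. Qed.

Lemma adj_flip i x : adj x (flip i x).
Proof.
rewrite /adj (_ : [set j | _] = [set i]) ?cards1 //; apply/setP => j.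
by rewrite !inE ffunE; case: (j == i); case: (x j).
Qed.

Lemma adj_sym x y : adj x y = adj y x.
Proof.
rewrite /adj (_ : [set j | x j != y j] = [set j | y j != x j]) //.
by apply/setP => j; rewrite !inE eq_sym.
Qed.

(* Fold the [true]-slice onto the [false]-slice: the folded class U shatters no
   set containing [i], and every set shattered by U or lying in
   [shattered_both E i] is shattered by E. Pajor's lemma for U and ampleness of
   E then force the two slices to overlap after folding. *)
Lemma ample_edge E i x y : ample E -> x \in E -> y \in E -> x i = false -> y i = true ->
  exists2 u, u \in slice E i false & flip i u \in E.
Proof.
move=> aE xE yE xi yi.
set E0 := slice E i false; set E1 := slice E i true; set U := E0 :|: flip i @: E1.
have cF : #|flip i @: E1| = #|E1| by apply: card_imset; apply: inv_inj; apply: flipK.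
have shU Y : shatters U Y -> i \notin Y.
  move/shattersP => H; apply/negP => iY; have [c] := H [ffun=> true].
  rewrite !inE => /orP[/andP[_ /eqP ci]|/imsetP[e]]; first by move/(_ i iY); rewrite ffunE ci.
  by rewrite inE => /andP[_ /eqP ei] -> /(_ i iY); rewrite !ffunE eqxx ei.
have shUE : shattered U :|: shattered_both E i \subset shattered E.
  apply/subsetP => Y; rewrite inE => /orP[|YB]; last first.
    by apply: (subsetP (shattered_slices_sub E i)); rewrite !inE YB !orbT.
  rewrite !inE => UY; have iY := shU _ UY; move/shattersP: UY => UY.
  apply/shattersP => f; have [c cU cf] := UY f.
  move: cU; rewrite !inE => /orP[/andP[cE _]|/imsetP[e]]; first by exists c.
  rewrite inE => /andP[eE _] ce; exists e => // j jY; rewrite -cf // ce ffunE.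
  by case: eqP => // ji; move: iY; rewrite -ji jY.
have disj : shattered U :&: shattered_both E i = set0.
  apply/setP => Y; rewrite !inE; apply/negP => /andP[/shU iY /mem_shattered_both].
  by rewrite (negbTE iY).
have both0 : 0 < #|shattered E0 :&: shattered E1|.
  apply/card_gt0P; exists set0; rewrite !inE !shatters0.
  by apply/andP; split; apply/set0Pn; [exists x | exists y]; rewrite inE ?xE ?yE ?xi ?yi.
have c1 := subset_leq_card shUE.
rewrite cardsU disj cards0 subn0 card_shattered_both in c1.
have : #|U| + #|shattered E0 :&: shattered E1| <= #|U| + #|E0 :&: flip i @: E1|.
  rewrite cardsUI cF -card_slices -aE; apply: leq_trans c1.
  by rewrite leq_add2r pajor.
rewrite leq_add2l => /(leq_trans both0) /card_gt0P[u].
rewrite inE => /andP[uE0 /imsetP[e eE1 ue]].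
by exists u; rewrite // ue flipK (subsetP (slice_sub E i true)).
Qed.

Definition adj_in D : rel (cube n) := fun x y => [&& x \in D, y \in D & adj x y].

Lemma connect_adj_inS D E x y : D \subset E -> connect (adj_in D) x y -> connect (adj_in E) x y.
Proof.
move=> DE; apply: connect_sub => u v /and3P[uD vD uv]; apply: connect1.
by rewrite /adj_in (subsetP DE _ uD) (subsetP DE _ vD).
Qed.

Lemma connect_adj_in_sym D : connect_sym (adj_in D).
Proof. by apply: sym_connect_sym => u v; rewrite /adj_in adj_sym andbCA. Qed.

(* Induction on #|E|: connect within the [i]-slices and cross with [ample_edge]. *)
Lemma ample_connect E x y : ample E -> x \in E -> y \in E -> connect (adj_in E) x y.
Proof.
elim: {E}#|E| {-2}E (leqnn #|E|) x y => [|k IH] E.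
  by rewrite leqn0 cards_eq0 => /eqP-> x y _; rewrite inE.
move=> Ek x y aE xE yE; have [<-|/exists_coord_neq[i xy]] := eqVneq x y; first exact: connect0.
have [a0 a1 _] := ample_slices i aE.
have connect_slice b u v : u \in slice E i b -> v \in slice E i b -> connect (adj_in E) u v.
  move=> uS vS; apply: connect_adj_inS (slice_sub E i b) _.
  have lt_k : #|slice E i b| <= k by rewrite -ltnS (leq_trans (card_slice_lt b xE yE xy)).
  by apply: (IH _ lt_k); case: b uS vS {lt_k}.
wlog xi : x y xE yE xy / x i = false.
  move=> W; case xi: (x i); last exact: W.
  have yi : y i = false by move: xy; rewrite xi; case: (y i).
  by rewrite connect_adj_in_sym; apply: W; rewrite // eq_sym.
have yi : y i = true by move: xy; rewrite xi; case: (y i).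
have [u uS fuE] := ample_edge aE xE yE xi yi.
have uE : u \in E := subsetP (slice_sub E i false) u uS.
apply: connect_trans (connect_slice false x u _ uS) _; first by rewrite inE xE xi.
apply: connect_trans (connect1 (_ : adj_in E u (flip i u))) (connect_slice true _ y _ _).
- by rewrite /adj_in uE fuE adj_flip.
- by rewrite inE fuE ffunE eqxx; move: uS; rewrite inE => /andP[_ /eqP->].
- by rewrite inE yE yi.
Qed.

Definition fiber D W h := [set x in D | [forall j in W, x j == h j]].

Lemma fiber_sub D W h : fiber D W h \subset D.
Proof. by apply/subsetP => x; rewrite inE => /andP[]. Qed.

Lemma ample_fiber D W h : ample D -> ample (fiber D W h).
Proof.
move=> aD; elim: {W}#|W| {-2}W (erefl #|W|) => [|k IH] W.
  move/eqP; rewrite cards_eq0 => /eqP->; suff -> : fiber D set0 h = D by [].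
  by apply/setP => x; rewrite inE; case: (x \in D) => //=; apply/forall_inP => j; rewrite inE.
move=> Wk; have [i iW] : exists i, i \in W by apply/set0Pn; rewrite -cards_eq0 Wk.
have -> : fiber D W h = slice (fiber D (W :\ i) h) i (h i).
  apply/setP => x; rewrite !inE -andbA; congr (_ && _); apply/forall_inP/andP.
    move=> H; split; first by apply/forall_inP => j; rewrite inE => /andP[_ /H].
    exact: H.
  case=> /forall_inP H /eqP xi j jW; have [->|ji] := eqVneq j i; first by rewrite xi.
  by apply: H; apply/setD1P.
have Wk' : #|W :\ i| = k by move: Wk; rewrite (cardsD1 i W) iW; case.
by have := ample_slices i (IH (W :\ i) Wk'); case: (h i) => [[]|[]].
Qed.

End Connectivity.

Definition phi (d n : nat) := \sum_(i < d.+1) 'C(n, i).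

Lemma phi0 n : phi 0 n = 1.
Proof. by rewrite /phi big_ord1 bin0. Qed.

Lemma phiSS d m : phi d.+1 m.+1 = phi d.+1 m + phi d m.
Proof.
rewrite /phi big_ord_recl bin0.
rewrite (eq_bigr (fun i : 'I_d.+1 => 'C(m, i.+1) + 'C(m, i))); last first.
  by move=> i _; rewrite /= /bump /= add1n binS.
by rewrite big_split /= addnA [in RHS]big_ord_recl bin0.
Qed.

Section Tight.
Variable n : nat.
Implicit Types (D : {set cube n}) (Y : {set 'I_n}).

Definition vc_le D d := forall Y, shatters D Y -> #|Y| <= d.

(* [maximum] without the requirement that some set of size [d] is shattered. *)
Definition tight d D := vc_le D d /\ #|D| = phi d n.

Definition small_sets d := [set Y : {set 'I_n} | #|Y| <= d].

Lemma card_small_sets d : #|small_sets d| = phi d n.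
Proof.
elim: d => [|d IH].
  rewrite phi0 -(bin0 #|'I_n|) -card_draws; apply: eq_card => Y.
  by rewrite !inE leqn0.
have -> : small_sets d.+1 = small_sets d :|: [set Y : {set 'I_n} | #|Y| == d.+1].
  by apply/setP => Y; rewrite !inE leq_eqVlt ltnS orbC.
rewrite cardsU (_ : _ :&: _ = set0); last first.
  by apply/setP => Y; rewrite !inE; apply/negP => /andP[H /eqP E]; move: H; rewrite E ltnn.
by rewrite cards0 subn0 IH card_draws card_ord /phi [in RHS]big_ord_recr.
Qed.

Lemma shattered_small d D : vc_le D d -> shattered D \subset small_sets d.
Proof. by move=> H; apply/subsetP => Y; rewrite !inE => /H. Qed.

Lemma sauer d D : vc_le D d -> #|D| <= phi d n.
Proof.
by move=> H; rewrite -card_small_sets (leq_trans (pajor D)) ?subset_leq_card ?shattered_small.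
Qed.

Lemma tight_shattered d D : tight d D -> shattered D = small_sets d.
Proof. by case=> H cD; apply/eqP; rewrite eqEcard shattered_small // card_small_sets -cD pajor. Qed.

Lemma tight_ample d D : tight d D -> ample D.
Proof. by move=> tD; rewrite /ample (tight_shattered tD) card_small_sets; case: tD. Qed.

Lemma maximumE d D : d <= n -> (maximum d D <-> tight d D).
Proof.
move=> dn; split=> [[[_ H] cD]|tD]; first by split.
split; last by case: tD.
split; last by case: tD.
have : 0 < #|[set Y : {set 'I_n} | #|Y| == d]| by rewrite card_draws card_ord bin_gt0.
case/card_gt0P => Y; rewrite inE => /eqP cY; exists Y; split => //.
by have /setP/(_ Y) := tight_shattered tD; rewrite !inE cY leqnn.
Qed.

Lemma phi_full : phi n n = #|[set: cube n]|.
Proof.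
rewrite -card_small_sets cardsT card_ffun card_bool card_ord.
have -> : small_sets n = powerset [set: 'I_n].
  by apply/setP => Y; rewrite !inE subsetT; have := max_card (mem Y); rewrite card_ord => ->.
by rewrite card_powerset cardsT card_ord.
Qed.

Lemma card_phi_setT D : #|D| = phi n n -> D = setT.
Proof. by rewrite phi_full => H; apply/eqP; rewrite eqEcard subsetT H /=. Qed.

End Tight.

Definition subcube n (Y : {set 'I_n}) (x : cube n) :=
  [set y : cube n | [forall i in ~: Y, y i == x i]].

Lemma subcubeP n (Y : {set 'I_n}) (x y : cube n) :
  reflect (forall i, i \notin Y -> y i = x i) (y \in subcube Y x).
Proof.
rewrite inE; apply: (iffP forall_inP) => H i; rewrite ?inE => iY; apply/eqP; last exact: H.
by apply: H; rewrite inE.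
Qed.

Lemma subcube0 n (x : cube n) : subcube set0 x = [set x].
Proof.
apply/setP => y; rewrite in_set1; apply/subcubeP/eqP => [H|->] //.
by apply/ffunP => i; apply: H; rewrite inE.
Qed.

Lemma subcubeT n (x : cube n) : subcube setT x = setT.
Proof. by apply/setP => y; rewrite in_setT; apply/subcubeP => i; rewrite inE. Qed.

Lemma dcubeP n d (C Q : {set cube n}) :
  reflect (exists (Y : {set 'I_n}) (x : cube n), [/\ #|Y| = d, Q = subcube Y x & Q \subset C])
    (dcube_of d C Q).
Proof.
apply: (iffP andP) => [[/existsP[Y /andP[/eqP cY /existsP[x /eqP QE]]] QC]|[Y [x [cY QE QC]]]].
  by exists Y, x.
by split => //; apply/existsP; exists Y; rewrite cY eqxx; apply/existsP; exists x; rewrite QE.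
Qed.

Section LastCoordinate.
Variable m : nat.
Implicit Types (D : {set cube m.+1}) (C : {set cube m}) (Y : {set 'I_m})
  (c q x : cube m) (z : cube m.+1).

Lemma ext_max c b : ext c b ord_max = b.
Proof. by rewrite ffunE unlift_none. Qed.

Lemma ext_lift c b k : ext c b (lift ord_max k) = c k.
Proof. by rewrite ffunE liftK. Qed.

Definition init z : cube m := [ffun k => z (lift ord_max k)].

Lemma ext_init z : ext (init z) (z ord_max) = z.
Proof.
apply/ffunP => j; case: (unliftP ord_max j) => [k ->|->]; last by rewrite ext_max.
by rewrite ext_lift ffunE.
Qed.

Lemma init_ext c b : init (ext c b) = c.
Proof. by apply/ffunP => k; rewrite ffunE ext_lift. Qed.

Lemma ext_inj c c' b b' : ext c b = ext c' b' -> c = c' /\ b = b'.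
Proof.
move=> E; split; first by rewrite -(init_ext c b) E init_ext.
by rewrite -(ext_max c b) E ext_max.
Qed.

Lemma mem_times C c b b' : (ext c b \in times C b') = (c \in C) && (b == b').
Proof.
apply/imsetP/andP => [[c' c'C /ext_inj[-> ->]]|[cC /eqP->]]; last by exists c.
by rewrite eqxx.
Qed.

Definition level D b := [set c | ext c b \in D].
Lemma mem_level D b c : (c \in level D b) = (ext c b \in D).
Proof. by rewrite inE. Qed.

Definition proj D := level D false :|: level D true.
Definition reduct D := level D false :&: level D true.

Lemma card_proj_reduct D : #|D| = #|proj D| + #|reduct D|.
Proof.
have card_level b : #|slice D ord_max b| = #|level D b|.
  have -> : slice D ord_max b = (fun c => ext c b) @: level D b.
    apply/setP => z; rewrite inE; apply/andP/imsetP.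
      by case=> zD /eqP zb; exists (init z); rewrite ?inE -zb ext_init.
    by case=> c; rewrite inE => cD ->; rewrite cD ext_max.
  by apply: card_imset => c c' /ext_inj[].
by rewrite (card_slices D ord_max) !card_level cardsUI.
Qed.

Definition liftset Y : {set 'I_m.+1} := [set lift ord_max k | k in Y].
Definition unliftset (Y' : {set 'I_m.+1}) := [set k | lift ord_max k \in Y'].

Lemma card_liftset Y : #|liftset Y| = #|Y|.
Proof. by apply: card_imset; apply: lift_inj. Qed.

Lemma mem_liftset Y k : (lift ord_max k \in liftset Y) = (k \in Y).
Proof. by rewrite mem_imset //; apply: lift_inj. Qed.

Lemma max_notin_liftset Y : ord_max \notin liftset Y.
Proof. by apply/imsetP => [[k _ E]]; move: (neq_lift ord_max k); rewrite -E eqxx. Qed.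

Lemma card_unliftset (Y' : {set 'I_m.+1}) : #|Y'| = #|unliftset Y'| + (ord_max \in Y').
Proof.
rewrite (cardsD1 ord_max) addnC; congr (_ + _).
rewrite -(card_liftset (unliftset Y')); apply: eq_card => j; rewrite !inE.
case: (unliftP ord_max j) => [k ->|->]; last by rewrite eqxx (negbTE (max_notin_liftset _)).
by rewrite mem_liftset !inE eq_sym neq_lift.
Qed.

Lemma shatters_proj D Y : shatters (proj D) Y -> shatters D (liftset Y).
Proof.
move/shattersP => H; apply/shattersP => f; have [c] := H (init f).
rewrite !inE => cD cf; have [b bD] : exists b, ext c b \in D.
  by case/orP: cD => ?; [exists false|exists true].
by exists (ext c b) => // j /imsetP[k kY ->]; rewrite ext_lift cf // ffunE.
Qed.

Lemma shatters_reduct D Y : shatters (reduct D) Y -> shatters D (ord_max |: liftset Y).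
Proof.
move/shattersP => H; apply/shattersP => f; have [c] := H (init f).
rewrite !inE => /andP[c0 c1] cf; exists (ext c (f ord_max)); first by case: (f ord_max).
move=> j; rewrite !inE => /orP[/eqP->|/imsetP[k kY ->]]; first by rewrite ext_max.
by rewrite ext_lift cf // ffunE.
Qed.

Lemma shatters_unliftset D (Y' : {set 'I_m.+1}) : shatters D Y' -> shatters (proj D) (unliftset Y').
Proof.
move/shattersP => H; apply/shattersP => c; have [z zD zf] := H (ext c false).
exists (init z); last by move=> k; rewrite inE => /zf; rewrite ext_lift ffunE.
by rewrite !inE; move: zD; rewrite -{1}(ext_init z); case: (z ord_max) => ->; rewrite ?orbT.
Qed.

Lemma tight_proj_reduct d D : tight d.+1 D -> tight d.+1 (proj D) /\ tight d (reduct D).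
Proof.
case=> H cD.
have vcP : vc_le (proj D) d.+1 by move=> Y /shatters_proj/H; rewrite card_liftset.
have vcR : vc_le (reduct D) d.
  by move=> Y /shatters_reduct/H; rewrite cardsU1 (negbTE (max_notin_liftset _)) card_liftset.
have sP := sauer vcP; have sR := sauer vcR.
move: cD; rewrite card_proj_reduct phiSS => cD.
suff [eP eR] : #|proj D| = phi d.+1 m /\ #|reduct D| = phi d m by split; split.
by move: sP sR cD; move: #|proj D| #|reduct D| => a b; lia.
Qed.

Lemma mem_subcube_liftset Y x q b b' :
  (ext q b \in subcube (liftset Y) (ext x b')) = (q \in subcube Y x) && (b == b').
Proof.
apply/subcubeP/andP => [H|[/subcubeP H /eqP->] j].
  split; last by have := H ord_max (max_notin_liftset Y); rewrite !ext_max => ->.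
  by apply/subcubeP => k kY; have := H (lift ord_max k); rewrite mem_liftset !ext_lift; apply.
case: (unliftP ord_max j) => [k ->|->]; last by rewrite !ext_max.
by rewrite mem_liftset !ext_lift; apply: H.
Qed.

Lemma mem_subcube_max_liftset Y x q b b' :
  (ext q b \in subcube (ord_max |: liftset Y) (ext x b')) = (q \in subcube Y x).
Proof.
have lift_notin k : (lift ord_max k \in ord_max |: liftset Y) = (k \in Y).
  by rewrite !inE mem_liftset eq_sym (negbTE (neq_lift _ _)).
apply/subcubeP/subcubeP => [H k kY|H j].
  by have := H (lift ord_max k); rewrite lift_notin !ext_lift; apply.
case: (unliftP ord_max j) => [k ->|->]; last by rewrite !inE eqxx.
by rewrite lift_notin !ext_lift; apply: H.
Qed.

(* The fiber E of D pinned to [x] outside [Y] and the last coordinate is ample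
   and shatters [liftset Y]; as the last coordinate is not in [liftset Y], one
   of the two last-coordinate slices of E already shatters it, and that slice
   must then contain the whole lifted subcube. *)
Lemma ample_subcube_level D Y x : ample D -> subcube Y x \subset proj D ->
  exists b, subcube Y x \subset level D b.
Proof.
move=> aD QP.
set W := ~: (ord_max |: liftset Y); set E := fiber D W (ext x false).
have liftW k : (lift ord_max k \in W) = (k \notin Y).
  by rewrite !inE mem_liftset eq_sym (negbTE (neq_lift _ _)).
have shE : shatters E (liftset Y).
  apply/shattersP => f.
  pose q : cube m := [ffun k => if k \in Y then f (lift ord_max k) else x k].
  have qQ : q \in subcube Y x by apply/subcubeP => k kY; rewrite ffunE (negbTE kY).
  have [b bD] : exists b, ext q b \in D.
    by move: (subsetP QP q qQ); rewrite !inE => /orP[] ?; [exists false|exists true].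
  exists (ext q b).
    rewrite inE bD; apply/forall_inP => j; case: (unliftP ord_max j) => [k ->|->].
      by rewrite liftW => kY; rewrite !ext_lift ffunE (negbTE kY).
    by rewrite !inE eqxx.
  by move=> j /imsetP[k kY ->]; rewrite ext_lift ffunE kY.
have slice_level b : shatters (slice E ord_max b) (liftset Y) -> subcube Y x \subset level D b.
  move/shattersP => S; apply/subsetP => q qQ; have [c] := S (ext q b).
  rewrite inE => /andP[cE /eqP cb] cf; rewrite inE.
  suff <- : c = ext q b by apply: (subsetP (fiber_sub _ _ _)) cE.
  apply/ffunP => j; case: (unliftP ord_max j) => [k ->|->]; last by rewrite ext_max cb.
  have [kY|kY] := boolP (k \in Y); first by rewrite cf ?mem_liftset.
  move: cE; rewrite inE => /andP[_ /forall_inP/(_ (lift ord_max k))].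
  rewrite liftW kY => /(_ isT)/eqP->; rewrite !ext_lift.
  by move/subcubeP: qQ => ->.
have [S|S] := ample_shatters_slice (ample_fiber W (ext x false) aD) (max_notin_liftset Y) shE.
  by exists false; apply: slice_level.
by exists true; apply: slice_level.
Qed.

Lemma shatters_fiber_point D (Y' : {set 'I_m.+1}) g b : shatters D Y' -> ord_max \in Y' ->
  exists2 x, ext x b \in D & x \in fiber (proj D) (unliftset Y') g.
Proof.
move/shattersP => /(_ (ext g b)) [z zD zg] maxY.
have zb : z ord_max = b by rewrite zg // ext_max.
have zD' : ext (init z) b \in D by rewrite -zb ext_init.
exists (init z) => //; rewrite inE; apply/andP; split.
  by rewrite !inE; case: (b) zD' => ->; rewrite ?orbT.
by apply/forall_inP => k; rewrite inE => kY; rewrite ffunE zg ?ext_lift.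
Qed.

End LastCoordinate.

Lemma dcube0_set1 n (C : {set cube n}) x : x \in C -> dcube_of 0 C [set x].
Proof. by move=> xC; apply/dcubeP; exists set0, x; rewrite cards0 subcube0 sub1set. Qed.

Lemma dcube_full n : dcube_of n [set: cube n] [set: cube n].
Proof.
apply/dcubeP; exists setT, [ffun=> false].
by rewrite subcubeT cardsT card_ord subxx.
Qed.

Lemma tight_dcube_cover n d (C : {set cube n}) x : tight d C -> d <= n -> x \in C ->
  exists2 Q, dcube_of d C Q & x \in Q.
Proof.
elim: n d C x => [|m IH] [|d] C x tC dn xC; try by exists [set x]; rewrite ?dcube0_set1 ?set11.
have [dm|dm] := eqVneq d m.
  by subst d; exists setT; rewrite ?inE // (card_phi_setT (proj2 tC)) dcube_full.
have {dn dm}dm : d < m by rewrite ltn_neqAle dm.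
have [tP tR] := tight_proj_reduct tC.
rewrite -(ext_init x) in xC *; move: (init x) (x ord_max) xC => y b yC.
have [yR|yR] := boolP (y \in reduct C).
  have [_ /dcubeP[Y [x0 [cY -> QR]]] yQ] := IH d (reduct C) y tR (ltnW dm) yR.
  exists (subcube (ord_max |: liftset Y) (ext x0 false)); last by rewrite mem_subcube_max_liftset.
  apply/dcubeP; exists (ord_max |: liftset Y), (ext x0 false); split => //.
    by rewrite cardsU1 max_notin_liftset card_liftset cY.
  apply/subsetP => z; rewrite -(ext_init z) mem_subcube_max_liftset => /(subsetP QR).
  by rewrite !inE; case: (z ord_max) => /andP[].
have yP : y \in proj C by rewrite !inE; case: (b) yC => ->; rewrite ?orbT.
have [_ /dcubeP[Y [x0 [cY -> QP]]] yQ] := IH d.+1 (proj C) y tP dm yP.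
have [b0 /subsetP Qb0] := ample_subcube_level (tight_ample tC) QP.
have bb : b0 = b.
  apply/eqP; apply: contraNT yR => bb; have := Qb0 y yQ; rewrite !inE.
  by move: yC bb; case: (b); case: (b0) => //= -> _ ->.
exists (subcube (liftset Y) (ext x0 b)); last by rewrite mem_subcube_liftset yQ eqxx.
apply/dcubeP; exists (liftset Y), (ext x0 b); split; rewrite ?card_liftset //.
apply/subsetP => z; rewrite -(ext_init z) mem_subcube_liftset => /andP[qQ /eqP->].
by have := Qb0 _ qQ; rewrite inE bb.
Qed.

Lemma connect_invariant (T : finType) (U : Type) (e : rel T) (f : T -> U) :
  (forall x y, e x y -> f x = f y) -> forall x y, connect e x y -> f x = f y.
Proof.
move=> H x y /connectP[s]; elim: s x => [|z s IH] x /=; first by move=> _ ->.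
by case/andP => exz ps ly; rewrite (H _ _ exz); apply: IH.
Qed.

Lemma adj_subcube n (u v : cube n) : adj u v -> exists i, subcube [set i] u = [set u; v].
Proof.
case/cards1P => i Hi; exists i.
have uv j : (u j != v j) = (j == i) by rewrite -in_set1 -Hi inE.
have agree j : j != i -> v j = u j.
  by move=> ji; apply/eqP; rewrite eq_sym; move: (uv j); rewrite (negbTE ji) => /negbFE.
apply/setP => y; rewrite in_set2; apply/subcubeP/orP => [yu|[/eqP->|/eqP-> j]] //; last first.
  by rewrite inE => /agree.
have [yi|yi] := eqVneq (y i) (u i); [left|right]; apply/eqP/ffunP => j.
  by have [->|ji] := eqVneq j i; rewrite ?yi // yu // inE.
have [->|ji] := eqVneq j i; last by rewrite yu ?inE // agree.
by move: yi (uv i); rewrite eqxx; case: (y i); case: (u i); case: (v i).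
Qed.

Definition built m d (C C' : {set cube m}) (p : {set cube m} -> bool) :=
  times C' false :|: times C' true :|: \bigcup_(Q | dcube_of d C Q) times Q (p Q).

Lemma mem_built m d (C C' : {set cube m}) p c b :
  (ext c b \in built d C C' p) =
  (c \in C') || [exists Q, [&& dcube_of d C Q, c \in Q & p Q == b]].
Proof.
rewrite /built !inE !mem_times; case: (c \in C') => /=; first by case: b.
apply/bigcupP/existsP => [[Q dQ]|[Q /and3P[dQ cQ /eqP pQ]]].
  by rewrite mem_times => /andP[cQ /eqP pQ]; exists Q; rewrite dQ cQ pQ eqxx.
by exists Q => //; rewrite mem_times cQ pQ eqxx.
Qed.

Section BuiltTight.
Variables (m d : nat) (C C' : {set cube m}) (p : {set cube m} -> bool).
Hypotheses (dm : d < m) (tC : tight d.+1 C) (tC' : tight d C') (C'C : C' \subset C).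
Hypothesis p_comp :
  forall Q1 Q2, dcube_of d.+1 C Q1 -> same_comp d.+1 C C' Q1 Q2 -> p Q1 = p Q2.

Lemma eq_p_pathin Q1 Q2 x y : dcube_of d.+1 C Q1 -> dcube_of d.+1 C Q2 ->
  x \in Q1 -> y \in Q2 -> pathin (C :\: C') x y -> p Q1 = p Q2.
Proof.
move=> d1 d2 x1 y2 xy; apply: (p_comp d1); apply: connect1.
by rewrite /cconn d1 d2; apply/exists_inP; exists x => //; apply/exists_inP; exists y.
Qed.

Lemma proj_built : proj (built d.+1 C C' p) = C.
Proof.
apply/setP => c; rewrite in_setU !mem_level !mem_built; apply/idP/idP.
  have inC b : (c \in C') || [exists Q, [&& dcube_of d.+1 C Q, c \in Q & p Q == b]] -> c \in C.
    case/orP => [|/existsP[Q /and3P[/andP[_ QC] cQ _]]]; first exact: (subsetP C'C).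
    exact: (subsetP QC).
  by case/orP; apply: inC.
move=> cC; have [//|cC'] := boolP (c \in C').
have [Q dQ cQ] := tight_dcube_cover tC dm cC.
by apply/orP; case pQ: (p Q); [right|left]; apply/existsP; exists Q; rewrite dQ cQ pQ.
Qed.

Lemma reduct_built : reduct (built d.+1 C C' p) = C'.
Proof.
apply/setP => c; rewrite in_setI !mem_level !mem_built; have [//|cC'] := boolP (c \in C').
apply/negP => /andP[/existsP[Q1 /and3P[d1 c1 /eqP p1]] /existsP[Q2 /and3P[d2 c2 /eqP p2]]].
have cD : c \in C :\: C' by rewrite inE cC' (subsetP (proj2 (andP d1))).
by have := eq_p_pathin d1 d2 c1 c2 (introT andP (conj cD (connect0 _ _))); rewrite p1 p2.
Qed.

(* A set with the last coordinate and [d+1] others shattered by the built class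
   would give a pattern g on those [d+1] coordinates missed by C'. The points of
   C matching g avoid C' and form an ample, hence connected, class; it contains
   points lifted to both levels, which lie in d-cubes with different bits. *)
Lemma built_vc_le : vc_le (built d.+1 C C' p) d.+1.
Proof.
move=> Y' shY; rewrite (card_unliftset Y').
have hP : #|unliftset Y'| <= d.+1.
  by apply: (proj1 tC); rewrite -proj_built; apply: shatters_unliftset.
have [maxY|] := boolP (ord_max \in Y'); last by rewrite addn0.
rewrite addn1 ltn_neqAle hP andbT; apply/eqP => eZ.
have [g Hg] : exists g : cube m, ~~ [exists c in C', [forall i in unliftset Y', c i == g i]].
  by apply/existsP; rewrite -negb_forall; apply/negP => /(proj1 tC'); rewrite eZ ltnn.
set F := fiber C (unliftset Y') g.
have FC : F \subset C :\: C'.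
  apply/subsetP => x; rewrite !inE => /andP[xC xZ]; rewrite xC andbT.
  by apply: contra Hg => xC'; apply/exists_inP; exists x.
have [x xD xF] := shatters_fiber_point g false shY maxY.
have [y yD yF] := shatters_fiber_point g true shY maxY.
rewrite proj_built -/F in xF yF.
have xy : pathin (C :\: C') x y.
  rewrite /pathin (subsetP FC x xF); apply: connect_adj_inS FC _.
  exact: ample_connect (ample_fiber _ _ (tight_ample tC)) xF yF.
have notC' z : z \in F -> z \notin C' by move/(subsetP FC); rewrite inE => /andP[].
move: xD yD; rewrite !mem_built (negbTE (notC' x xF)) (negbTE (notC' y yF)) /=.
move=> /existsP[Q1 /and3P[d1 x1 /eqP p1]] /existsP[Q2 /and3P[d2 y2 /eqP p2]].
by have := eq_p_pathin d1 d2 x1 y2 xy; rewrite p1 p2.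
Qed.

Lemma built_tight : tight d.+1 (built d.+1 C C' p).
Proof.
split; first exact: built_vc_le.
by rewrite card_proj_reduct proj_built reduct_built (proj2 tC) (proj2 tC') phiSS.
Qed.

End BuiltTight.

Section TightBuilt.
Variables (m d : nat) (C : {set cube m.+1}).
Hypotheses (tC : tight d.+1 C) (dm : d < m).

(* Outside [reduct C] a point of [proj C] lies on exactly one level; the bit of
   a d-cube of [proj C] is the level of its points outside [reduct C]. *)
Definition top_bit (q : cube m) := ext q true \in C.
Definition cube_bit (Q : {set cube m}) := [exists q in Q :\: reduct C, top_bit q].

Lemma top_bit_level q b : q \notin reduct C -> ext q b \in C -> top_bit q = b.
Proof.
rewrite in_setI !mem_level /top_bit; case: b => // qR qC.
by apply/negP => qC'; move: qR; rewrite qC qC'.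
Qed.

Lemma cube_bit_subcube Y x u : subcube Y x \subset proj C ->
  u \in subcube Y x -> u \notin reduct C -> cube_bit (subcube Y x) = top_bit u.
Proof.
move=> QP uQ uR; have [b /subsetP Qb] := ample_subcube_level (tight_ample tC) QP.
have bit_b v : v \in subcube Y x :\: reduct C -> top_bit v = b.
  by case/setDP => vQ vR; apply: top_bit_level; rewrite // -mem_level Qb.
have uQR : u \in subcube Y x :\: reduct C by rewrite inE uR.
rewrite (bit_b u uQR); apply/existsP; case: b bit_b {Qb} => bit_b.
  by exists u; rewrite uQR bit_b.
by case=> v /andP[/bit_b ->].
Qed.

Lemma top_bit_adj u v : u \in proj C :\: reduct C -> v \in proj C :\: reduct C ->
  adj u v -> top_bit u = top_bit v.
Proof.
move=> /setDP[uP uR] /setDP[vP vR] /adj_subcube[i Q].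
have QP : subcube [set i] u \subset proj C by rewrite Q subUset !sub1set uP vP.
rewrite -(cube_bit_subcube QP _ uR) ?(cube_bit_subcube QP _ vR) //.
  by rewrite Q !inE eqxx orbT.
by rewrite Q !inE eqxx.
Qed.

Lemma cube_bit_same_comp Q1 Q2 : dcube_of d.+1 (proj C) Q1 ->
  same_comp d.+1 (proj C) (reduct C) Q1 Q2 -> cube_bit Q1 = cube_bit Q2.
Proof.
move=> _; apply: connect_invariant => {}Q1 {}Q2.
case/and3P => /dcubeP[Y1 [x1 [_ -> S1]]] /dcubeP[Y2 [x2 [_ -> S2]]].
case/exists_inP => u uQ /exists_inP[v vQ /andP[uD cuv]].
have vD : v \in proj C :\: reduct C.
  rewrite -(connect_invariant (f := fun x => x \in proj C :\: reduct C) _ cuv) //.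
  by move=> x y /and3P[-> ->].
have buv : top_bit u = top_bit v.
  by apply: (connect_invariant _ cuv) => x y /and3P[xD yD]; apply: top_bit_adj.
move: uD vD => /setDP[_ uR] /setDP[_ vR].
by rewrite (cube_bit_subcube S1 uQ uR) (cube_bit_subcube S2 vQ vR).
Qed.

Lemma tight_eq_built : C = built d.+1 (proj C) (reduct C) cube_bit.
Proof.
have [tP _] := tight_proj_reduct tC.
apply/setP => z; rewrite -(ext_init z); move: (init z) (z ord_max) => c b.
rewrite mem_built; apply/idP/idP => [cC|].
  have [//|cR] := boolP (c \in reduct C).
  have cP : c \in proj C by rewrite in_setU !mem_level; case: (b) cC => ->; rewrite ?orbT.
  have [Q dQ cQ] := tight_dcube_cover tP dm cP.
  have /dcubeP[Y [x [_ QE QP]]] := dQ; rewrite QE in cQ QP.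
  apply/existsP; exists Q; rewrite dQ QE cQ (cube_bit_subcube QP cQ cR).
  by rewrite (top_bit_level cR cC) eqxx.
have in_reduct : c \in reduct C -> ext c b \in C.
  by rewrite in_setI !mem_level; case: (b) => /andP[].
case/orP => [/in_reduct //|/existsP[Q /and3P[/dcubeP[Y [x [_ -> QP]]] cQ /eqP pb]]].
have [/in_reduct //|cR] := boolP (c \in reduct C).
 rewrite (cube_bit_subcube QP cQ cR) /top_bit in pb; case: (b) pb => // cT.
by move: (subsetP QP c cQ); rewrite in_setU !mem_level cT orbF.
Qed.

End TightBuilt.

Lemma tight_isM n d (C : {set cube n}) : 0 < n -> d <= n -> tight d C -> isM d C.
Proof.
elim: n d C => [//|m IH] [|d] C _ dn tC.
  have /cards1P[v ->] : #|C| == 1 by rewrite (proj2 tC) phi0.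
  exact: M_zero.
have [dm|dm] := eqVneq d m.
  by subst d; rewrite (card_phi_setT (proj2 tC)); apply: M_full.
have {dn dm}dm : d < m by rewrite ltn_neqAle dm.
have [tP tR] := tight_proj_reduct tC.
have m0 : 0 < m by apply: leq_ltn_trans dm.
rewrite (tight_eq_built tC dm); apply: M_step => //.
- exact: IH.
- exact: IH (ltnW dm) tR.
- by apply/subsetP => c; rewrite in_setI in_setU => /andP[->].
- exact: cube_bit_same_comp.
Qed.

Lemma vc_le_set1 n (v : cube n) : vc_le [set v] 0.
Proof.
move=> Y /shattersP H; rewrite leqn0 cards_eq0; apply/eqP/setP => i; rewrite inE.
apply/negP => iY; have [c] := H [ffun j => ~~ v j]; rewrite inE => /eqP-> /(_ i iY).
by rewrite ffunE; case: (v i).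
Qed.

Lemma isM_tight n d (C : {set cube n}) : isM d C -> tight d C.
Proof.
elim=> {n d C} [n v _ | n _ | m [//|d] C C' p _ dm _ tC _ tC' C'C p_comp].
- by split; [apply: vc_le_set1 | rewrite cards1 phi0].
- split; last by rewrite phi_full.
  by move=> Y _; rewrite -[leqRHS]card_ord max_card.
- exact: built_tight.
Qed.

Theorem lemma2 (n d : nat) (C : {set cube n}) :
  1 <= d <= n -> (isM d C <-> maximum d C).
Proof.
move=> /andP[d1 dn]; rewrite (maximumE C dn); split; first exact: isM_tight.
exact: tight_isM (leq_trans d1 dn) dn.
Qed.
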